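(* Let $\Phi=(V,Q,\mathcal{C})$ be a CSP formula with atomic constraints and $h=(h_v)_{v\in V}$ a projection scheme satisfying the entropy criterion with parameters $0<\beta<\alpha<1$. Let $D$ be the maximum degree of the dependency graph of $\Phi$ and $q_v=|Q_v|$, $s_v=|\Sigma_v|$. Suppose that for every $c\in\mathcal{C}$, $\sum_{v\in\mathrm{vbl}(c)}\log q_v\ge\frac1\beta\log(40\mathrm{e}D^2)$. Then for any variable $u\in V$, any $\tau\in\bigotimes_{v\in V\setminus\{u\}}\Sigma_v$ and any $y\in\Sigma_u$, $$\nu_u^{\tau}(y)\le\frac{1}{q_u}\Big\lceil\frac{q_u}{s_u}\Big\rceil\exp\Big(\frac1{20D}\Big).$$
   Context: A CSP formula: variables $V$ with finite domains $Q_v$ ($|Q_v|\ge2$), constraints $c$ on $\mathrm{vbl}(c)\subseteq V$; atomic means violated by exactly one configuration of its variables. Dependency graph: vertices $\mathcal{C}$, adjacency iff variable sets intersect. $\mu$: uniform distribution over satisfying assignments. Projection scheme: $h_v:Q_v\to\Sigma_v$. Entropy criterion with $(\alpha,\beta)$: $\lfloor q_v/s_v\rfloor\le|h_v^{-1}(y)|\le\lceil q_v/s_v\rceil$ for all $v,y$; and for each $c$: $\sum_{v\in\mathrm{vbl}(c)}\log\lceil q_v/s_v\rceil\le\alpha\sum_{v\in\mathrm{vbl}(c)}\log q_v$, $\sum_{v\in\mathrm{vbl}(c)}\log\lfloor q_v/s_v\rfloor\ge\beta\sum_{v\in\mathrm{vbl}(c)}\log q_v$. $\nu$ is the distribution of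 $(h_v(X_v))_v$ for $X\sim\mu$, and $\nu_u^\tau$ denotes the marginal distribution at $u$ of $\nu$ conditioned on the values at $V\setminus\{u\}$ being $\tau$. $\log$ is base 2. *)

From mathcomp Require Import all_boot all_order all_algebra.
From mathcomp Require Import all_classical all_reals all_analysis.
Set Implicit Arguments. Unset Strict Implicit. Unset Printing Implicit Defensive.
Import Order.TTheory GRing.Theory Num.Theory.
Local Open Scope ring_scope.

Definition log2 {R : realType} (x : R) : R := ln x / ln 2.

Definition ceildiv (q s : nat) : nat := (q %/ s + ~~ (s %| q))%N.

Section CSP.
Variables (V : finType) (q s : V -> nat) (C : finType).

Definition assignment := {dffun forall v : V, 'I_(q v)}.
Definition proj_assignment := {dffun forall v : V, 'I_(s v)}.

(* An atomic constraint c is given by its variable set vbl c and the unique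
   configuration forb c (restricted to vbl c) violating it. *)
Variables (vbl : C -> {set V}) (forb : C -> assignment).

Definition violates (c : C) (x : assignment) : bool :=
  [forall v in vbl c, x v == forb c v].

Definition satisfies (x : assignment) : bool := [forall c, ~~ violates c x].

Definition dep_degree (c : C) : nat :=
  #|[set c' | (c' != c) && ~~ [disjoint vbl c & vbl c']]|.

Definition max_degree : nat := (\max_(c : C) dep_degree c)%N.

Variable h : forall v : V, 'I_(q v) -> 'I_(s v).

(* entropy criterion with parameters (alpha, beta).
   The side condition 0 < floor(q_v/s_v) for v in vbl c encodes the convention
   log 0 = -oo (ln 0 = 0 in the library). *)
Definition entropy_criterion {R : realType} (alpha beta : R) : Prop :=
  (forall v (y : 'I_(s v)),
      (q v %/ s v <= #|[set x : 'I_(q v) | h x == y]| <= ceildiv (q v) (s v))%N)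
  /\ (forall c : C,
      \sum_(v in vbl c) log2 (ceildiv (q v) (s v))%:R
        <= alpha * \sum_(v in vbl c) log2 ((q v)%:R : R))
  /\ (forall c : C,
      (forall v, v \in vbl c -> 0 < q v %/ s v)%N /\
      \sum_(v in vbl c) log2 (q v %/ s v)%:R
        >= beta * \sum_(v in vbl c) log2 ((q v)%:R : R)).

Definition agrees_off (u : V) (tau : proj_assignment) (x : assignment) : bool :=
  [forall v, (v != u) ==> (h (x v) == tau v)].

Definition nu_cond {R : realType} (u : V) (tau : proj_assignment) (y : 'I_(s u)) : R :=
  (#|[set x : assignment | satisfies x && agrees_off u tau x && (h (x u) == y)]|%:R)
  / (#|[set x : assignment | satisfies x && agrees_off u tau x]|%:R).

End CSP.

(* The assignments compatible with tau form a
   product set, the fiber, on which the uniform measure is a product measure,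
   so events depending on disjoint sets of variables are independent.  By the
   lower entropy bound every constraint is violated on a fraction at most
   P = 1/(40 e D^2) of the fiber.  A counting form of the Lovasz local lemma,
   by induction on the size of S, shows that among the points of the fiber
   avoiding a set S of constraints, a constraint c outside S is violated with
   frequency at most w = 4P/3.  Dropping the constraints through u makes the
   value at u independent of everything else, which yields the factor
   ceil(q_u/s_u)/q_u; restoring them costs at most a factor
   1 - |constraints at u| w, which exp(1/(20D)) compensates. *)

From mathcomp Require Import all_boot all_order all_algebra.
From mathcomp Require Import all_classical all_reals all_analysis.
From mathcomp Require Import lra.
Import Order.TTheory GRing.Theory Num.Theory.
Set Implicit Arguments. Unset Strict Implicit. Unset Printing Implicit Defensive.
Local Open Scope ring_scope.

Lemma card_family_prod (aT : finType) (rT : aT -> finType)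
    (F : forall x, pred (rT x)) :
  #|(family F : simpl_pred {dffun forall x : aT, rT x})| = (\prod_x #|F x|)%N.
Proof. by rewrite card_family foldrE big_map big_enum. Qed.

Lemma ln_prod (R : realType) (I : Type) (r : seq I) (P : pred I) (F : I -> R) :
  (forall i, P i -> 0 < F i) ->
  ln (\prod_(i <- r | P i) F i) = \sum_(i <- r | P i) ln (F i).
Proof.
move=> F_gt0; suff [] : 0 < \prod_(i <- r | P i) F i /\
  ln (\prod_(i <- r | P i) F i) = \sum_(i <- r | P i) ln (F i) by [].
apply: (big_rec2 (fun a b => 0 < a /\ ln a = b)); first by rewrite ln1.
move=> i a b Pi [a_gt0 <-]; split; first by rewrite mulr_gt0 ?F_gt0.
by rewrite lnM // posrE ?F_gt0.
Qed.

Lemma le_prod_of_log2 (R : realType) (I : finType) (P : pred I) (f : I -> nat) (K : R) :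
  0 < K -> (forall i, P i -> 0 < f i)%N ->
  log2 K <= \sum_(i | P i) log2 (f i)%:R -> K <= (\prod_(i | P i) f i)%:R.
Proof.
move=> K_gt0 f_gt0; have ln2_gt0 : 0 < ln (2 : R) by rewrite ln_gt0 // ltr1n.
rewrite /log2 -mulr_suml ler_pM2r ?invr_gt0 // natr_prod -ln_prod => [|i Pi].
  by rewrite ler_ln // posrE prodr_gt0 // => i Pi; rewrite ltr0n f_gt0.
by rewrite ltr0n f_gt0.
Qed.

Lemma lll_prob_small (R : realType) (d : R) :
  1 <= d -> 80 * d ^+ 2 * (40 * expR 1 * d ^+ 2)^-1 <= 1.
Proof.
move=> d_ge1; have e_ge2 : 2 <= expR 1 :> R by have := expR_ge1Dx (1 : R); lra.
by rewrite mulrC ler_pdivrMl ?mulr1; nra.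
Qed.

Lemma lll_weight_condition (R : realType) (d P : R) :
  1 <= d -> 0 <= P -> 80 * d ^+ 2 * P <= 1 -> P <= 4 / 3 * P * (1 - d * (4 / 3 * P)).
Proof.
move=> d_ge1 P_ge0 dP_le; have dP_small : d * P <= 80^-1 by nra.
have : 0 <= P * (1 / 3 - 16 / 9 * (d * P)) by apply: mulr_ge0 => //; lra.
nra.
Qed.

Lemma one_sub_weight_mul_exp_ge1 (R : realType) (d P g : R) :
  1 <= d -> 0 <= P -> 80 * d ^+ 2 * P <= 1 -> 0 <= g <= d + 1 ->
  1 <= (1 - g * (4 / 3 * P)) * expR (20 * d)^-1.
Proof.
move=> d_ge1 P_ge0 dP_le /andP[g_ge0 g_le].
set a := (20 * d)^-1.
have a_d : a * (20 * d) = 1 by rewrite mulVf // gt_eqF //; lra.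
have a_gt0 : 0 < a by rewrite invr_gt0; lra.
have exp_ge : 1 + a <= expR a := expR_ge1Dx a.
have gP_le : g * (4 / 3 * P) <= 2 / 3 * a.
  have : g * (P * (20 * d)) <= 2 * d * (P * (20 * d)).
    by rewrite ler_wpM2r ?mulr_ge0 //; lra.
  nra.
have a_le : a <= 20^-1 by nra.
apply: le_trans (_ : (1 - 2 / 3 * a) * (1 + a) <= _); first nra.
by rewrite ler_pM //; lra.
Qed.

Section Dependency.
Variables (V C : finType) (vbl : C -> {set V}).

Definition neighbours (c : C) : {set C} :=
  [set b | (b != c) && ~~ [disjoint vbl c & vbl b]].

Lemma card_neighbours_le c : (#|neighbours c| <= max_degree vbl)%N.
Proof. exact: (@leq_bigmax C (dep_degree vbl) c). Qed.

Definition constraints_at (u : V) : {set C} := [set c | u \in vbl c].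

Lemma card_constraints_at_le u : (#|constraints_at u| <= (max_degree vbl).+1)%N.
Proof.
have [->|[c0 c0u]] := set_0Vmem (constraints_at u); first by rewrite cards0.
apply: leq_trans (_ : #|c0 |: neighbours c0| <= _)%N.
  apply: subset_leq_card; apply/fintype.subsetP => b; rewrite !inE in c0u *.
  case: (eqVneq b c0) => //= _ ub; apply/negP => /disjointFr/(_ c0u).
  by rewrite ub.
by rewrite cardsU1 -add1n leq_add ?leq_b1 ?card_neighbours_le.
Qed.

End Dependency.

Section Fiber.
Variables (V : finType) (q s : V -> nat) (C : finType).
Variables (vbl : C -> {set V}) (forb : C -> assignment q).
Variable h : forall v : V, 'I_(q v) -> 'I_(s v).
Variables (u : V) (tau : proj_assignment s).
Local Notation A := (assignment q).

Definition fiber_at (v : V) : pred 'I_(q v) := fun a => (v != u) ==> (h a == tau v).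

Definition fiber : {set A} := [set x | agrees_off h u tau x].

Lemma fiber_family : fiber =i (family fiber_at : simpl_pred A).
Proof. by move=> x; rewrite inE; apply/forallP/familyP => H v; apply: H. Qed.

Definition supported_on (T : {set V}) (E : pred A) :=
  forall x z : A, {in T, forall v, x v = z v} -> E x = E z.

Definition merge (T : {set V}) (x z : A) : A :=
  @finfun V (fun v => 'I_(q v)) (fun v => if v \in T then x v else z v).

Lemma mergeE T x z v : merge T x z v = if v \in T then x v else z v.
Proof. by rewrite ffunE. Qed.

Lemma merge_agrees T x z :
  agrees_off h u tau x -> agrees_off h u tau z -> agrees_off h u tau (merge T x z).
Proof.
move: (fiber_family x) (fiber_family z) (fiber_family (merge T x z)).
rewrite !inE => -> -> -> /familyP fx /familyP fz; apply/familyP => v.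
by rewrite mergeE; case: (v \in T).
Qed.

(* The fiber is a product set, so swapping the [T]-coordinates of two of its
   points is an involution of [fiber * fiber]; it exchanges the two products
   of sets counted on either side. *)
Lemma card_fiber_indep (T : {set V}) (E G : pred A) :
  supported_on T E -> supported_on (~: T) G ->
  (#|[set x in fiber | E x && G x]| * #|fiber| =
   #|[set x in fiber | E x]| * #|[set x in fiber | G x]|)%N.
Proof.
move=> suppE suppG; rewrite [in RHS]mulnC -!cardsX.
pose swap (p : A * A) := (merge T p.2 p.1, merge T p.1 p.2).
have swapK : involutive swap.
  move=> [x z]; rewrite /swap /=; congr (_, _); apply/ffunP => v;
    by rewrite !mergeE; case: (v \in T).
have E_swap x z : E (merge T x z) = E x.
  by apply: suppE => v vT; rewrite mergeE vT.
have G_swap x z : G (merge T x z) = G z.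
  by apply: suppG => v; rewrite inE mergeE => /negbTE ->.
have swap_le (X Y : {set A * A}) : {in X, forall p, swap p \in Y} -> (#|X| <= #|Y|)%N.
  move=> XY; rewrite -(card_imset X (inv_inj swapK)); apply: subset_leq_card.
  by apply/fintype.subsetP => _ /imsetP[p /XY pY ->].
apply/eqP; rewrite eqn_leq !swap_le // => -[x z]; rewrite !inE /= E_swap G_swap.
- by case/and3P=> /andP[fx Gx] fz Ez; rewrite !merge_agrees // Ez Gx.
- by case/andP=> /and3P[fx Ex Gx] fz; rewrite !merge_agrees // Ex Gx.
Qed.

Lemma card_fiber_at_u : #|fiber_at (v:=u)| = q u.
Proof. by rewrite -[RHS]card_ord; apply: eq_card => a; rewrite /in_mem /= /fiber_at eqxx. Qed.

Lemma card_fiber_at_ge v :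
  (forall y : 'I_(s v), q v %/ s v <= #|[set a | h a == y]|)%N ->
  (q v %/ s v <= #|fiber_at (v:=v)|)%N.
Proof.
move=> fib_ge; case: (eqVneq v u) => [->|vu]; first by rewrite card_fiber_at_u leq_div.
apply: leq_trans (fib_ge (tau v)) (subset_leq_card _).
by apply/fintype.subsetP => a; rewrite inE /in_mem /= /fiber_at vu.
Qed.

Lemma card_fiber_coord (Y : {set 'I_(q u)}) :
  (#|[set x in fiber | x u \in Y]| * q u = #|Y| * #|fiber|)%N.
Proof.
pose F := @dfwith V (fun v => 'I_(q v) -> bool) (fun v => fiber_at (v:=v)) u (mem Y).
have Fu : F u = mem Y by exact: dfwith_in.
have Fv v : u != v -> F v = fiber_at (v:=v) by exact: dfwith_out.
have -> : #|[set x in fiber | x u \in Y]| = #|(family F : simpl_pred A)|.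
  apply: eq_card => x; rewrite inE fiber_family; apply/andP/familyP.
    case=> /familyP fx xY v; case: (eqVneq u v) => [<-|uv]; first by rewrite Fu.
    by rewrite Fv //; apply: fx.
  move=> Fx; split; last by have := Fx u; rewrite Fu.
  apply/familyP => v; case: (eqVneq u v) => [<-|uv].
    by rewrite unfold_in /fiber_at eqxx.
  by have := Fx v; rewrite Fv.
rewrite (eq_card fiber_family) !card_family_prod (bigD1 u) // [in RHS](bigD1 u) //.
rewrite Fu card_fiber_at_u mulnAC -mulnA; congr (_ * (_ * _))%N.
by apply: eq_bigr => v vu; rewrite Fv // eq_sym.
Qed.

Lemma card_viol_fiber_prod_le c :
  (forall v (y : 'I_(s v)), q v %/ s v <= #|[set a | h a == y]|)%N ->
  (#|[set x in fiber | violates vbl forb c x]| * \prod_(v in vbl c) (q v %/ s v)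
     <= #|fiber|)%N.
Proof.
move=> fib_ge.
pose F v := [pred a : 'I_(q v) | fiber_at a && ((v \in vbl c) ==> (a == forb c v))].
have -> : #|[set x in fiber | violates vbl forb c x]| = #|(family F : simpl_pred A)|.
  apply: eq_card => x; rewrite inE fiber_family; apply/andP/familyP.
    by case=> /familyP fx /forallP xc v; apply/andP; split; [apply: fx | apply: xc].
  move=> Fx; split; first by apply/familyP => v; case/andP: (Fx v).
  by apply/forallP => v; case/andP: (Fx v).
rewrite (eq_card fiber_family) !card_family_prod [\prod_(v in vbl c) _]big_mkcond -big_split /=.
apply: leq_prod => v _; case: ifP => vc; last first.
  by rewrite muln1; apply: subset_leq_card; apply/fintype.subsetP => a /andP[].
apply: leq_trans (_ : 1 * (q v %/ s v) <= _)%N; last by rewrite mul1n card_fiber_at_ge.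
rewrite leq_mul2r -(card1 (forb c v)) subset_leq_card ?orbT //.
by apply/fintype.subsetP => a; rewrite !unfold_in /= => /andP[_ /eqP ->].
Qed.

Lemma card_viol_fiber_le (R : realType) (K : R) c :
  (forall v (y : 'I_(s v)), q v %/ s v <= #|[set a | h a == y]|)%N ->
  0 < K -> K <= (\prod_(v in vbl c) (q v %/ s v))%:R ->
  #|[set x in fiber | violates vbl forb c x]|%:R <= K^-1 * #|fiber|%:R.
Proof.
move=> fib_ge K_gt0 K_le; rewrite ler_pdivlMl //.
apply: le_trans (_ : _ <= (\prod_(v in vbl c) (q v %/ s v))%:R
                          * #|[set x in fiber | violates vbl forb c x]|%:R) _.
  by rewrite ler_wpM2r.
by rewrite mulrC -natrM ler_nat card_viol_fiber_prod_le.
Qed.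

Definition avoids (S : {set C}) (x : A) := [forall b in S, ~~ violates vbl forb b x].

Definition n_avoid (S : {set C}) := #|[set x in fiber | avoids S x]|.

Definition n_viol_avoid (c : C) (S : {set C}) :=
  #|[set x in fiber | violates vbl forb c x && avoids S x]|.

Lemma violates_supported c : supported_on (vbl c) (violates vbl forb c).
Proof. by move=> x z xz; apply: eq_forallb_in => v /xz ->. Qed.

Lemma avoids_supported (T : {set V}) (S : {set C}) :
  {in S, forall b, [disjoint T & vbl b]} -> supported_on (~: T) (avoids S).
Proof.
move=> dS x z xz; apply: eq_forallb_in => b bS; congr negb.
by apply: violates_supported => v vb; apply: xz; rewrite inE (disjointFl (dS b bS) vb).
Qed.

Lemma card_avoid_indep (T : {set V}) (E : pred A) (S : {set C}) :
  supported_on T E -> {in S, forall b, [disjoint T & vbl b]} ->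
  (#|[set x in fiber | E x && avoids S x]| * #|fiber| =
   #|[set x in fiber | E x]| * n_avoid S)%N.
Proof. by move=> suppE dS; apply: card_fiber_indep suppE (avoids_supported dS). Qed.

Lemma n_avoid_le_union (S1 S2 : {set C}) :
  (n_avoid S2 <= n_avoid (S1 :|: S2) + \sum_(b in S1) n_viol_avoid b S2)%N.
Proof.
pose U := \bigcup_(b in S1) [set x in fiber | violates vbl forb b x && avoids S2 x].
apply: leq_trans (_ : #|[set x in fiber | avoids (S1 :|: S2) x] :|: U| <= _)%N.
  apply: subset_leq_card; apply/fintype.subsetP => x; rewrite !inE => /andP[fx xS2].
  have [_|] := boolP (avoids (S1 :|: S2) x); first by rewrite fx.
  case/forall_inPn => b; rewrite inE negbK => /orP[bS1 xb|bS2 xb]; last first.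
    by move/forall_inP: xS2 => /(_ b bS2); rewrite xb.
  by apply/orP; right; apply/bigcupP; exists b; rewrite // !inE fx xb.
rewrite (leq_trans (leq_card_setU _ _)) // leq_add2l /U.
elim/big_ind2: _ => // [|m X n Y Xm Yn]; first by rewrite cards0.
by rewrite (leq_trans (leq_card_setU _ _)) ?leq_add.
Qed.

Lemma n_viol_avoid_le_sub c (S S' : {set C}) :
  S' \subset S -> (n_viol_avoid c S <= n_viol_avoid c S')%N.
Proof.
move=> sS'S; apply: subset_leq_card; apply/fintype.subsetP => x; rewrite !inE.
case/and3P=> -> -> /forall_inP xS; apply/forall_inP => b bS'.
by apply: xS; apply: (fintype.subsetP sS'S).
Qed.

Lemma n_avoid_mul_le (R : realType) (w : R) (S1 S2 : {set C}) :
  {in S1, forall b, (n_viol_avoid b S2)%:R <= w * (n_avoid S2)%:R} ->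
  (n_avoid S2)%:R * (1 - #|S1|%:R * w) <= (n_avoid (S1 :|: S2))%:R :> R.
Proof.
move=> viol_le; rewrite mulrBr mulr1 lerBlDr.
apply: le_trans (_ : _ <= (n_avoid (S1 :|: S2))%:R + \sum_(b in S1) (n_viol_avoid b S2)%:R) _.
  by rewrite -natr_sum -natrD ler_nat n_avoid_le_union.
rewrite lerD2l -sum1_card natr_sum mulr_suml mulr_sumr; apply: ler_sum => b bS1.
by rewrite mul1r mulrC viol_le.
Qed.

Section LocalLemma.
Variables (R : realType) (D : nat) (P w : R).
Hypotheses (fiber_gt0 : (0 < #|fiber|)%N)
  (viol_le : forall c, #|[set x in fiber | violates vbl forb c x]|%:R <= P * #|fiber|%:R)
  (neighbours_le : forall c, (#|neighbours vbl c| <= D)%N)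
  (w_ge0 : 0 <= w) (P_le : P <= w * (1 - D%:R * w)).

Lemma n_viol_avoid_le_far c (S : {set C}) : {in S, forall b, [disjoint vbl c & vbl b]} ->
  (n_viol_avoid c S)%:R <= P * (n_avoid S)%:R.
Proof.
move=> far; have := card_avoid_indep (@violates_supported c) far.
move/(congr1 (fun n : nat => n%:R : R)); rewrite !natrM => indep.
have fiber_gt0' : 0 < #|fiber|%:R :> R by rewrite ltr0n.
by rewrite -(ler_pM2r fiber_gt0') indep mulrAC ler_wpM2r.
Qed.

Lemma n_viol_avoid_le (S : {set C}) c : c \notin S ->
  (n_viol_avoid c S)%:R <= w * (n_avoid S)%:R.
Proof.
have [n] := ubnP #|S|; elim: n S c => // n IH S c /ltnSE leSn cS.
set S1 := S :&: neighbours vbl c; set S2 := S :\: neighbours vbl c.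
have far : {in S2, forall b, [disjoint vbl c & vbl b]}.
  move=> b; rewrite !inE => /andP[/nandP[/negPn/eqP bc | /negPn //] bS].
  by rewrite -bc bS in cS.
have near : {in S1, forall b, (n_viol_avoid b S2)%:R <= w * (n_avoid S2)%:R}.
  move=> b /setIP[bS bnb]; apply: IH; last by rewrite finset.in_setD bnb.
  apply: leq_trans leSn; rewrite -(cardsID (neighbours vbl c) S) -/S1 -/S2.
  by rewrite -[X in (X < _)%N]add0n ltn_add2r card_gt0; apply/set0Pn; exists b; apply/setIP.
have N2_le := n_avoid_mul_le near; rewrite setID in N2_le.
have V_le : (n_viol_avoid c S)%:R <= P * (n_avoid S2)%:R.
  by apply: le_trans (n_viol_avoid_le_far far); rewrite ler_nat n_viol_avoid_le_sub ?subsetDl.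
have S1_le : 1 - D%:R * w <= 1 - #|S1|%:R * w.
  rewrite lerD2l lerN2 ler_wpM2r // ler_nat (leq_trans _ (neighbours_le c)) //.
  by rewrite subset_leq_card ?subsetIr.
apply: (le_trans V_le); apply: le_trans (_ : w * (1 - D%:R * w) * (n_avoid S2)%:R <= _).
  by rewrite ler_wpM2r.
by rewrite -mulrA ler_wpM2l // mulrC (le_trans _ N2_le) // ler_wpM2l.
Qed.

End LocalLemma.

Lemma card_sat_le_fiber :
  (#|[set x | satisfies vbl forb x && agrees_off h u tau x]| <= #|fiber|)%N.
Proof. by apply: subset_leq_card; apply/fintype.subsetP => x; rewrite !inE => /andP[]. Qed.

Lemma n_avoid_setT :
  n_avoid [set: C] = #|[set x | satisfies vbl forb x && agrees_off h u tau x]|.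
Proof.
apply: eq_card => x; rewrite !inE andbC; congr (_ && _).
by apply/forall_inP/forallP => xS b; [apply: xS | rewrite xS].
Qed.

Lemma card_sat_proj_le (y : 'I_(s u)) (k : nat) :
  (0 < #|fiber|)%N -> (#|[set a | h a == y]| <= k)%N ->
  (#|[set x | satisfies vbl forb x && agrees_off h u tau x && (h (x u) == y)]| * q u
     <= k * n_avoid (~: constraints_at vbl u))%N.
Proof.
move=> fiber_gt0 fib_le; set S := ~: constraints_at vbl u.
pose Ey := fun x : A => h (x u) == y.
apply: leq_trans (_ : #|[set x in fiber | Ey x && avoids S x]| * q u <= _)%N.
  rewrite leq_mul2r subset_leq_card ?orbT //; apply/fintype.subsetP => x.
  rewrite !inE /Ey => /andP[/andP[/forallP sat ->] ->] /=.
  by apply/forall_inP => b _; apply: sat.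
have Ey_supp : supported_on [set u] Ey by move=> x z xz; rewrite /Ey xz ?inE.
have far : {in S, forall b, [disjoint [set u] & vbl b]}.
  by move=> b; rewrite !inE disjoints1.
rewrite -(leq_pmul2r fiber_gt0) mulnAC (card_avoid_indep Ey_supp far).
have -> : [set x in fiber | Ey x] = [set x in fiber | x u \in [set a | h a == y]].
  by apply/setP => x; rewrite !inE.
rewrite mulnAC card_fiber_coord [in leqRHS]mulnAC.
by rewrite leq_mul2r leq_mul2r fib_le !orbT.
Qed.

Lemma nu_cond_mul_le (R : realType) (w : R) (y : 'I_(s u)) (k : nat) :
  (0 < q u)%N -> (#|[set a | h a == y]| <= k)%N ->
  (0 < #|[set x | satisfies vbl forb x && agrees_off h u tau x]|)%N ->
  (forall (S : {set C}) c, c \notin S -> (n_viol_avoid c S)%:R <= w * (n_avoid S)%:R) ->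
  0 <= 1 - #|constraints_at vbl u|%:R * w ->
  nu_cond vbl forb h tau y * (1 - #|constraints_at vbl u|%:R * w) <= k%:R / (q u)%:R.
Proof.
move=> q_gt0 fib_le den_gt0 viol_le t_ge0.
set G := constraints_at vbl u; set t := 1 - _.
have num_le := card_sat_proj_le (leq_trans den_gt0 card_sat_le_fiber) fib_le.
have near : {in G, forall b, (n_viol_avoid b (~: G))%:R <= w * (n_avoid (~: G))%:R}.
  by move=> b bG; apply: viol_le; rewrite finset.in_setC negbK.
have := n_avoid_mul_le near; rewrite finset.setUCr n_avoid_setT -/t => den_ge.
rewrite /nu_cond mulrAC ler_pdivrMr ?ltr0n // mulrAC ler_pdivlMr ?ltr0n //.
rewrite mulrAC; apply: le_trans (_ : k%:R * (n_avoid (~: G))%:R * t <= _).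
  by rewrite ler_wpM2r // -!natrM ler_nat.
by rewrite -mulrA ler_wpM2l.
Qed.

End Fiber.

Unset Implicit Arguments.
Theorem lemma7p7 (R : realType) (V : finType) (q s : V -> nat) (C : finType)
  (vbl : C -> {set V}) (forb : C -> assignment q)
  (h : forall v : V, 'I_(q v) -> 'I_(s v)) (alpha beta : R) :
  (forall v, 2 <= q v)%N ->
  0 < beta -> beta < alpha -> alpha < 1 ->
  entropy_criterion vbl h alpha beta ->
  (0 < max_degree vbl)%N ->
  (forall c : C,
     \sum_(v in vbl c) log2 ((q v)%:R : R) >=
       beta^-1 * log2 (40 * expR 1 * ((max_degree vbl)%:R) ^+ 2)) ->
  forall (u : V) (tau : proj_assignment s) (y : 'I_(s u)),
    (0 < #|[set x : assignment q | satisfies vbl forb x && agrees_off h u tau x]|)%N ->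
    nu_cond vbl forb h (R:=R) (u:=u) tau y <=
      ((q u)%:R)^-1 * (ceildiv (q u) (s u))%:R * expR ((20 * (max_degree vbl)%:R)^-1).
Proof.
move=> q_ge2 beta_gt0 _ _ [fib_card [_ ent_ge]] D_gt0 log_ge u tau y den_gt0.
set D := max_degree vbl in D_gt0 log_ge *.
pose K : R := 40 * expR 1 * D%:R ^+ 2; pose w := 4 / 3 * K^-1.
have D_ge1 : 1 <= D%:R :> R by rewrite ler1n.
have K_gt0 : 0 < K by rewrite !mulr_gt0 ?exprn_gt0 ?expR_gt0 ?ltr0n.
have Kinv_ge0 : 0 <= K^-1 by rewrite invr_ge0 ltW.
have DK_le := lll_prob_small D_ge1.
have fib_ge v (y' : 'I_(s v)) := (andP (fib_card v y')).1.
have viol_le c : #|[set x in fiber h u tau | violates vbl forb c x]|%:R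
                   <= K^-1 * #|fiber h u tau|%:R.
  have [floor_gt0 ent_c] := ent_ge c.
  apply: card_viol_fiber_le fib_ge K_gt0 (le_prod_of_log2 K_gt0 floor_gt0 _).
  by apply: le_trans ent_c; rewrite -ler_pdivrMl.
have w_ge0 : 0 <= w by rewrite mulr_ge0.
have lll := n_viol_avoid_le (leq_trans den_gt0 (card_sat_le_fiber _ _ _ _ _)) viol_le
  (card_neighbours_le vbl) w_ge0 (lll_weight_condition D_ge1 Kinv_ge0 DK_le).
have t_ge : 1 <= (1 - #|constraints_at vbl u|%:R * w) * expR (20 * D%:R)^-1.
  by apply: one_sub_weight_mul_exp_ge1; rewrite ?ler0n ?natr1 ?ler_nat ?card_constraints_at_le.
have t_gt0 : 0 < 1 - #|constraints_at vbl u|%:R * w.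
  by rewrite -(pmulr_lgt0 _ (expR_gt0 (20 * D%:R)^-1)) (lt_le_trans ltr01 t_ge).
have nu_le := nu_cond_mul_le (ltnW (q_ge2 u)) (andP (fib_card u y)).2 den_gt0 lll (ltW t_gt0).
apply: le_trans (ler_peMr (divr_ge0 (ler0n _ _) (ler0n _ _)) t_ge) _.
rewrite mulrA; apply: ler_wpM2r; first exact: expR_ge0.
by rewrite [leRHS]mulrC; exact: nu_le.
Qed.
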